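(* Let $(X,Y,Z,W)$ be a solution of system (S) on an interval $(-\infty,t_{max})$. Assume $\lim_{t\to-\infty}(X,Y,Z,W)(t)=(0,0,1,0)$ and $\left|\int_{-\infty}^{T_0}X(t)\,dt\right|<\infty$ for some $T_0$ in the interval. Normalize $g$ so that $g(t)=\lambda e^{\int_{-\infty}^tX(\tau)d\tau}$ with $\lambda>0$, and suppose $Y(t_0)>0$ for some $t_0$. Then $\mathcal L$ is strictly increasing, $\mathcal L>0$, and $0<\int_{-\infty}^{T_0}\mathcal L(t)\,dt<\infty$.
   Context: Fix a positive integer $d$ and a real number $q$. Put $A_2=d(d+2)$ and $A_3=\tfrac14 d(d+2)^2q^2$. System (S) is $$X'=X(dX^2+Z^2-1)+\tfrac{A_2}{d}Y^2-2\tfrac{A_3}{d}W^2,\qquad Y'=Y(dX^2+Z^2-X),$$ $$Z'=Z(dX^2+Z^2-1)+A_3W^2,\qquad W'=W(dX^2+Z^2-2X+Z).$$ For a solution, $g$ denotes a solution of $g'=gX$, determined up to a multiplicative constant, and $\mathcal L=gY$. When $\int_{-\infty}^{T}X\,dt$ is finite, $\lambda:=\lim_{t\to-\infty}g(t)$ exists, and the normalization of $g$ is fixed by choosing $\lambda$. *)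

From Stdlib Require Import Reals.
Open Scope R_scope.

(* The maximal interval (-oo, tmax); tmax = None encodes tmax = +oo. *)
Definition in_dom (tmax : option R) (t : R) : Prop :=
  match tmax with None => True | Some b => t < b end.

Definition A2 (d : nat) : R := INR d * (INR d + 2).
Definition A3 (d : nat) (q : R) : R := / 4 * INR d * (INR d + 2) ^ 2 * q ^ 2.

Definition solves_S (d : nat) (q : R) (tmax : option R)
  (X Y Z W : R -> R) : Prop :=
  forall t, in_dom tmax t ->
    derivable_pt_lim X t
      (X t * (INR d * X t ^ 2 + Z t ^ 2 - 1) + A2 d / INR d * Y t ^ 2
       - 2 * (A3 d q / INR d) * W t ^ 2) /\
    derivable_pt_lim Y t (Y t * (INR d * X t ^ 2 + Z t ^ 2 - X t)) /\
    derivable_pt_lim Z t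
      (Z t * (INR d * X t ^ 2 + Z t ^ 2 - 1) + A3 d q * W t ^ 2) /\
    derivable_pt_lim W t (W t * (INR d * X t ^ 2 + Z t ^ 2 - 2 * X t + Z t)).

Definition lim_minus_infty (f : R -> R) (l : R) : Prop :=
  forall eps, 0 < eps -> exists M, forall t, t < M -> Rabs (f t - l) < eps.

Definition improper_int_lower (f : R -> R) (T I : R) : Prop :=
  (forall a, a <= T -> inhabited (Riemann_integrable f a T)) /\
  (forall eps, 0 < eps -> exists M, forall a (pr : Riemann_integrable f a T),
      a < M -> a <= T -> Rabs (RiemannInt pr - I) < eps).

From Stdlib Require Import Reals Lra Psatz Classical.
From Coquelicot Require Import Coquelicot.
Open Scope R_scope.

(* L = gY satisfies L' = L (d X^2 + Z^2), so L = L(t0) exp ∫ (d X^2 + Z^2) is positive and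
   nondecreasing.  It is strictly increasing: if d X^2 + Z^2 vanished on an interval, then
   X = Z = 0 there, hence X' = Z' = 0, and the equations for X' and Z' force Y = 0.
   As t -> -oo, Z -> 1 gives d X^2 + Z^2 >= 1/2, so L <= 2 L' and the partial integrals
   ∫_a^M L <= 2 L(M) are bounded; being positive, they converge. *)

Lemma locally_open_interval s t u : s < u < t -> locally u (fun v => s < v < t).
Proof.
  intros Hu.
  apply (locally_open (fun v => s < v /\ v < t)); auto.
  apply open_and; [apply open_gt | apply open_lt].
Qed.

Lemma is_derive_const_on_interval (f : R -> R) c s t u l :
  (forall v, s < v < t -> f v = c) -> s < u < t -> is_derive f u l -> l = 0.
Proof.
  intros Hc Hu Hf.
  rewrite <- (is_derive_unique f u l Hf).
  apply is_derive_unique, (is_derive_ext_loc (fun _ => c)); [|apply (is_derive_const c u)].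
  apply (filter_imp (fun v => s < v < t)); [|now apply locally_open_interval].
  intros v Hv; now rewrite Hc.
Qed.

Lemma is_derive_nonneg_le (f f' : R -> R) a b : a <= b ->
  (forall u, a <= u <= b -> is_derive f u (f' u)) ->
  (forall u, a <= u <= b -> 0 <= f' u) -> f a <= f b.
Proof.
  intros Hab Hf Hf'.
  destruct (MVT_gen f a b f') as [c [Hc Hmvt]].
  - intros u Hu; apply Hf; rewrite Rmin_left, Rmax_right in Hu; lra.
  - intros u Hu; rewrite Rmin_left, Rmax_right in Hu by exact Hab.
    apply continuity_pt_filterlim, (ex_derive_continuous (V := R_NormedModule)).
    eexists; apply Hf; lra.
  - rewrite Rmin_left, Rmax_right in Hc by exact Hab.
    specialize (Hf' c Hc); nra.
Qed.

(* If [f s = f t], monotonicity makes [f] constant on [[s, t]], so [f'] vanishes on [(s, t)]. *)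
Lemma is_derive_nonneg_lt (f f' : R -> R) s t : s < t ->
  (forall u, s <= u <= t -> is_derive f u (f' u)) ->
  (forall u, s <= u <= t -> 0 <= f' u) ->
  ~ (forall u, s < u < t -> f' u = 0) -> f s < f t.
Proof.
  intros Hst Hf Hf' Hnz.
  assert (Hmono : forall a b, s <= a <= b -> b <= t -> f a <= f b).
  { intros a b Hab Hbt; apply (is_derive_nonneg_le f f'); try lra;
      intros u Hu; [apply Hf | apply Hf']; lra. }
  destruct (Rle_lt_or_eq_dec (f s) (f t)) as [|Heq]; [apply Hmono; lra | easy |].
  exfalso; apply Hnz; intros u Hu.
  apply (is_derive_const_on_interval f (f s) s t u); [|easy|apply Hf; lra].
  intros v Hv.
  assert (f s <= f v) by (apply Hmono; lra).
  assert (f v <= f t) by (apply Hmono; lra).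
  lra.
Qed.

Lemma RInt_le_of_le_derive (f F F' : R -> R) a b : a <= b ->
  (forall u, a <= u <= b -> is_derive F u (F' u)) ->
  (forall u, a <= u <= b -> continuous F' u) ->
  (forall u, a <= u <= b -> continuous f u) ->
  (forall u, a <= u <= b -> f u <= F' u) -> RInt f a b <= F b - F a.
Proof.
  intros Hab HF HF' Hf Hle.
  assert (E : RInt F' a b = F b - F a).
  { apply is_RInt_unique, (is_RInt_derive (V := R_CompleteNormedModule));
      rewrite Rmin_left, Rmax_right by exact Hab; auto. }
  rewrite <- E.
  apply RInt_le; auto;
    [| | intros u Hu; apply Hle; lra];
    apply (ex_RInt_continuous (V := R_CompleteNormedModule));
    rewrite Rmin_left, Rmax_right by exact Hab; auto.
Qed.

Section Domain.
Variable tmax : option R.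
Local Notation D := (in_dom tmax).

Lemma in_dom_le s t : D t -> s <= t -> D s.
Proof. unfold in_dom; destruct tmax; auto; lra. Qed.

Lemma locally_in_dom t : D t -> locally t D.
Proof.
  unfold in_dom; destruct tmax as [b|]; intros Ht.
  - exact (locally_open _ _ (open_lt b) (fun _ H => H) t Ht).
  - exact (filter_true (F := locally t)).
Qed.

Lemma in_dom_between a b u : D a -> D b -> Rmin a b <= u <= Rmax a b -> D u.
Proof.
  intros Ha Hb Hu; apply in_dom_le with (Rmax a b); [|lra].
  unfold Rmax; destruct Rle_dec; auto.
Qed.

Lemma ex_RInt_in_dom (f : R -> R) a b :
  (forall z, D z -> continuous f z) -> D a -> D b -> ex_RInt f a b.
Proof.
  intros Hf Ha Hb; apply (ex_RInt_continuous (V := R_CompleteNormedModule)).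
  intros u Hu; apply Hf, (in_dom_between a b); auto.
Qed.

Lemma is_derive_RInt_in_dom (h : R -> R) a u :
  (forall z, D z -> continuous h z) -> D a -> D u ->
  is_derive (fun v => RInt h a v) u (h u).
Proof.
  intros Hh Ha Hu; apply is_derive_RInt with (a := a); [|now apply Hh].
  apply (filter_imp D); [|now apply locally_in_dom].
  intros v Hv; now apply RInt_correct, ex_RInt_in_dom.
Qed.

(* [f exp(-∫ h)] has derivative zero. *)
Lemma linear_ode_exp (f h : R -> R) t0 t :
  (forall u, D u -> is_derive f u (f u * h u)) ->
  (forall u, D u -> continuous h u) -> D t0 -> D t ->
  f t = f t0 * exp (RInt h t0 t).
Proof.
  intros Hf Hh H0 Ht.
  set (phi := fun u => f u * exp (- RInt h t0 u)).
  assert (Hphi : forall u, D u -> is_derive phi u 0).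
  { intros u Hu.
    evar (l : R); replace 0 with l; [apply (is_derive_mult f (fun u => exp (- RInt h t0 u)))|].
    - now apply Hf.
    - apply (is_derive_comp exp (fun u => - RInt h t0 u)); [apply is_derive_exp|].
      now apply (is_derive_opp (fun v => RInt h t0 v)), is_derive_RInt_in_dom.
    - intros; apply Rmult_comm.
    - unfold l, plus, mult, scal, opp; simpl; unfold mult; simpl; ring. }
  destruct (MVT_gen phi t0 t (fun _ => 0)) as [c [_ Hc]].
  - intros u Hu; apply Hphi, (in_dom_between t0 t); auto; lra.
  - intros u Hu; apply continuity_pt_filterlim, (ex_derive_continuous (V := R_NormedModule)).
    eexists; apply Hphi, (in_dom_between t0 t); auto.
  - unfold phi in Hc; rewrite RInt_point in Hc; unfold zero in Hc; simpl in Hc.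
    rewrite Ropp_0, exp_0 in Hc.
    replace (f t) with (f t * exp (- RInt h t0 t) * exp (RInt h t0 t))
      by (rewrite Rmult_assoc, <- exp_plus, Rplus_opp_l, exp_0; ring).
    f_equal; lra.
Qed.

Lemma improper_int_lower_Chasles (f : R -> R) s t Is It :
  (forall z, D z -> continuous f z) -> D s -> D t ->
  improper_int_lower f s Is -> improper_int_lower f t It -> It = Is + RInt f s t.
Proof.
  intros Hf Hs Ht [_ HIs] [_ HIt].
  apply Rminus_diag_uniq; destruct (Req_dec (It - (Is + RInt f s t)) 0) as [|Hne]; auto.
  set (eps := Rabs (It - (Is + RInt f s t))).
  assert (Heps : 0 < eps) by now apply Rabs_pos_lt.
  destruct (HIs (eps / 2)) as [Ms HMs]; [lra|].
  destruct (HIt (eps / 2)) as [Mt HMt]; [lra|].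
  set (a := Rmin (Rmin Ms Mt) (Rmin s t) - 1).
  assert (Ha : a < Ms /\ a < Mt /\ a <= s /\ a <= t).
  { generalize (Rmin_l (Rmin Ms Mt) (Rmin s t)) (Rmin_r (Rmin Ms Mt) (Rmin s t))
      (Rmin_l Ms Mt) (Rmin_r Ms Mt) (Rmin_l s t) (Rmin_r s t); unfold a; lra. }
  destruct Ha as [H1 [H2 [H3 H4]]].
  assert (Da : D a) by now apply in_dom_le with s.
  assert (Eas : ex_RInt f a s) by now apply ex_RInt_in_dom.
  assert (Eat : ex_RInt f a t) by now apply ex_RInt_in_dom.
  assert (Est : ex_RInt f s t) by now apply ex_RInt_in_dom.
  specialize (HMs a (ex_RInt_Reals_0 _ _ _ Eas) H1 H3).
  specialize (HMt a (ex_RInt_Reals_0 _ _ _ Eat) H2 H4).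
  rewrite <- RInt_Reals in HMs, HMt.
  rewrite <- (RInt_Chasles f a s t Eas Est) in HMt; unfold plus in HMt; simpl in HMt.
  apply Rabs_def2 in HMs; apply Rabs_def2 in HMt.
  assert (Rabs (It - (Is + RInt f s t)) < eps) by (apply Rabs_def1; lra).
  unfold eps in *; lra.
Qed.

Lemma is_derive_exp_improper_int (f h : R -> R) lam t :
  (forall u, D u -> exists Iu, improper_int_lower h u Iu /\ f u = lam * exp Iu) ->
  (forall z, D z -> continuous h z) -> D t -> is_derive f t (f t * h t).
Proof.
  intros Hf Hh Ht.
  destruct (Hf t Ht) as [It [HIt Eft]].
  apply (is_derive_ext_loc (fun u => lam * exp (It + RInt h t u))).
  - apply (filter_imp D); [|now apply locally_in_dom].
    intros u Hu; destruct (Hf u Hu) as [Iu [HIu ->]].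
    now rewrite (improper_int_lower_Chasles h t u It Iu).
  - evar (l : R); replace (f t * h t) with l.
    + apply (is_derive_scal (fun u => exp (It + RInt h t u))).
      apply (is_derive_comp exp (fun u => It + RInt h t u)); [apply is_derive_exp|].
      apply (is_derive_plus (fun _ => It) (fun u => RInt h t u)); [apply is_derive_const|].
      now apply is_derive_RInt_in_dom.
    + unfold l, plus, scal, zero; simpl; unfold mult; simpl.
      rewrite RInt_point, Eft; unfold zero; simpl.
      rewrite Rplus_0_r; ring.
Qed.

(* The improper integral is the supremum of the partial integrals, which increase as [a] decreases. *)
Lemma improper_int_lower_of_bounded (f : R -> R) M T B :
  (forall z, D z -> continuous f z) -> D T -> M <= T ->
  (forall u, u <= T -> 0 <= f u) ->
  (forall a, a <= M -> RInt f a M <= B) ->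
  exists I, improper_int_lower f T I /\ forall a, a <= T -> RInt f a T <= I.
Proof.
  intros Hf HT HMT Hpos Hbnd.
  set (F := fun a => RInt f a T).
  assert (Hex : forall a b, a <= T -> b <= T -> ex_RInt f a b)
    by (intros; apply ex_RInt_in_dom; auto; eapply in_dom_le; eauto).
  assert (Fmono : forall a b, a <= b -> b <= T -> F b <= F a).
  { intros a b Hab HbT; unfold F.
    rewrite <- (RInt_Chasles f a b T) by (apply Hex; lra); unfold plus; simpl.
    assert (0 <= RInt f a b); [|lra].
    apply RInt_ge_0; auto; [apply Hex; lra | intros; apply Hpos; lra]. }
  assert (Fbnd : forall a, a <= T -> F a <= B + F M).
  { intros a Ha; destruct (Rle_or_lt a M) as [HaM|HaM].
    - unfold F; rewrite <- (RInt_Chasles f a M T) by (apply Hex; lra).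
      unfold plus; simpl; specialize (Hbnd a HaM); lra.
    - assert (F a <= F M) by (apply Fmono; lra).
      assert (0 <= B) by (specialize (Hbnd M (Rle_refl M)); rewrite RInt_point in Hbnd; exact Hbnd).
      lra. }
  set (E := fun x => exists a, a <= T /\ x = F a).
  destruct (completeness E) as [I [Hub Hlub]].
  { exists (B + F M); intros x [a [Ha ->]]; now apply Fbnd. }
  { exists (F T), T; split; [lra | easy]. }
  exists I; split; [split|].
  - intros a Ha; constructor; apply ex_RInt_Reals_0, Hex; lra.
  - intros eps Heps.
    destruct (classic (exists a0, a0 <= T /\ I - eps < F a0)) as [[a0 [Ha0 Hlt]]|Hnone].
    + exists a0; intros a pr Ha HaT.
      rewrite <- RInt_Reals; fold (F a).
      assert (F a0 <= F a) by (apply Fmono; lra).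
      assert (F a <= I) by (apply Hub; now exists a).
      apply Rabs_def1; lra.
    + exfalso; assert (I <= I - eps); [|lra].
      apply Hlub; intros x [a [Ha ->]]; apply Rnot_lt_le; intros Hlt.
      apply Hnone; now exists a.
  - intros a Ha; apply Hub; now exists a.
Qed.

End Domain.

(* [L' = L * L_growth d X Z] for [L = g Y]. *)
Definition L_growth (d : nat) (X Z : R -> R) (t : R) : R := INR d * X t ^ 2 + Z t ^ 2.

Section Growth.
Variables (d : nat) (X Z : R -> R).

Lemma L_growth_ge_sqr t : Z t ^ 2 <= L_growth d X Z t.
Proof.
  unfold L_growth.
  assert (0 <= INR d * X t ^ 2) by (apply Rmult_le_pos; [apply pos_INR | apply pow2_ge_0]).
  lra.
Qed.

Lemma L_growth_nonneg t : 0 <= L_growth d X Z t.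
Proof. apply Rle_trans with (Z t ^ 2); [apply pow2_ge_0 | apply L_growth_ge_sqr]. Qed.

Lemma L_growth_eq0 t : (0 < d)%nat -> L_growth d X Z t = 0 -> X t = 0 /\ Z t = 0.
Proof.
  intros Hd; unfold L_growth; intros H0.
  assert (0 < INR d) by (apply lt_0_INR; lia).
  generalize (pow2_ge_0 (X t)) (pow2_ge_0 (Z t)); intros.
  split; apply Rsqr_0_uniq; unfold Rsqr; nra.
Qed.

Lemma L_growth_continuous t : continuous X t -> continuous Z t -> continuous (L_growth d X Z) t.
Proof.
  intros HX HZ; unfold L_growth.
  apply (continuous_plus (fun t => INR d * X t ^ 2) (fun t => Z t ^ 2));
    [apply (continuous_mult (fun _ => INR d) (fun t => X t ^ 2)); [apply continuous_const|]|];
    apply (continuous_mult _ (fun t => _ ^ 1)); auto;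
    apply (continuous_mult _ (fun _ => 1)); auto; apply continuous_const.
Qed.

End Growth.

Section System.
Variables (d : nat) (q : R) (tmax : option R) (X Y Z W : R -> R).
Hypothesis Hsol : solves_S d q tmax X Y Z W.
Local Notation D := (in_dom tmax).

Lemma solves_S_continuous t : D t -> continuous X t /\ continuous Z t.
Proof.
  intros Ht; destruct (Hsol t Ht) as [HX [_ [HZ _]]].
  split; apply (ex_derive_continuous (V := R_NormedModule));
    eexists; apply is_derive_Reals; eassumption.
Qed.

(* With [g' = g X], the term [- X] of [Y'/Y] cancels. *)
Lemma solves_S_is_derive_gY (g : R -> R) t :
  (forall u, D u -> is_derive g u (g u * X u)) -> D t ->
  is_derive (fun u => g u * Y u) t (g t * Y t * L_growth d X Z t).
Proof.
  intros Hg Ht; destruct (Hsol t Ht) as [_ [HY _]].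
  evar (l : R); replace (g t * Y t * _) with l.
  - apply (is_derive_mult g Y); [now apply Hg | apply is_derive_Reals, HY |].
    intros; apply Rmult_comm.
  - unfold l, L_growth, plus, mult; simpl; unfold mult; simpl; ring.
Qed.

(* There [X' = Z' = 0], i.e. [(d + 2) Y^2 = 2 A3 W^2 / d] and [A3 W^2 = 0]. *)
Lemma solves_S_Y_vanishes (s t : R) : (0 < d)%nat -> D t ->
  (forall u, s < u < t -> X u = 0 /\ Z u = 0) -> forall u, s < u < t -> Y u = 0.
Proof.
  intros Hd Ht HXZ u Hu.
  assert (Hdpos : 0 < INR d) by (apply lt_0_INR; lia).
  destruct (HXZ u Hu) as [Xu Zu].
  destruct (Hsol u (in_dom_le tmax u t Ht ltac:(lra))) as [HX [_ [HZ _]]].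
  apply is_derive_Reals, (is_derive_const_on_interval X 0 s t u) in HX;
    [|intros; now apply HXZ | exact Hu].
  apply is_derive_Reals, (is_derive_const_on_interval Z 0 s t u) in HZ;
    [|intros; now apply HXZ | exact Hu].
  rewrite Xu, Zu in HX; rewrite Zu in HZ.
  assert (HW : A3 d q * W u ^ 2 = 0) by lra.
  replace (2 * (A3 d q / INR d) * W u ^ 2) with (2 * (A3 d q * W u ^ 2) / INR d) in HX
    by (field; lra).
  rewrite HW in HX; unfold A2 in HX.
  replace (INR d * (INR d + 2) / INR d) with (INR d + 2) in HX by (field; lra).
  nra.
Qed.

End System.

Section WeightedY.
Variables (d : nat) (q : R) (tmax : option R) (X Y Z W g : R -> R) (lam t0 : R).
Hypothesis Hd : (0 < d)%nat.
Hypothesis Hsol : solves_S d q tmax X Y Z W.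
Hypothesis Hlam : 0 < lam.
Hypothesis Hg : forall t, in_dom tmax t ->
  exists It, improper_int_lower X t It /\ g t = lam * exp It.
Hypothesis Ht0 : in_dom tmax t0.
Hypothesis HYt0 : 0 < Y t0.
Local Notation D := (in_dom tmax).
Local Notation L := (fun t => g t * Y t).
Local Notation k := (L_growth d X Z).

Lemma L_growth_continuous_in_dom t : D t -> continuous k t.
Proof. intros Ht; apply L_growth_continuous; now apply (solves_S_continuous d q tmax X Y Z W). Qed.

Lemma is_derive_gY t : D t -> is_derive L t (L t * k t).
Proof.
  apply (solves_S_is_derive_gY d q tmax X Y Z W Hsol g).
  intros u Hu; apply (is_derive_exp_improper_int tmax g X lam u Hg); auto.
  now intros z Hz; apply (solves_S_continuous d q tmax X Y Z W).
Qed.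

Lemma gY_continuous t : D t -> continuous L t.
Proof.
  intros Ht; apply (ex_derive_continuous (V := R_NormedModule)).
  eexists; now apply is_derive_gY.
Qed.

Lemma gY_pos t : D t -> 0 < L t.
Proof.
  intros Ht; cbv beta.
  rewrite (linear_ode_exp tmax L k t0 t is_derive_gY L_growth_continuous_in_dom Ht0 Ht).
  destruct (Hg t0 Ht0) as [I0 [_ ->]].
  repeat apply Rmult_lt_0_compat; auto; apply exp_pos.
Qed.

Lemma gY_strict_incr s t : D t -> s < t -> L s < L t.
Proof.
  intros Ht Hst.
  assert (Dst : forall u, u <= t -> D u) by (intros; now apply (in_dom_le tmax u t)).
  apply (is_derive_nonneg_lt L (fun t => L t * k t)); auto.
  - intros u Hu; apply is_derive_gY, Dst; lra.
  - intros u Hu; apply Rmult_le_pos; [apply Rlt_le, gY_pos, Dst; lra | apply L_growth_nonneg].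
  - intros Hzero.
    assert (HXZ : forall u, s < u < t -> X u = 0 /\ Z u = 0).
    { intros u Hu; apply (L_growth_eq0 d); auto.
      assert (0 < L u) by (apply gY_pos, Dst; lra).
      destruct (Rmult_integral _ _ (Hzero u Hu)); [simpl in *; lra | easy]. }
    assert (Hm : s < (s + t) / 2 < t) by lra.
    assert (HLm := gY_pos ((s + t) / 2) (Dst ((s + t) / 2) ltac:(lra))); simpl in HLm.
    rewrite (solves_S_Y_vanishes d q tmax X Y Z W Hsol s t Hd Ht HXZ _ Hm) in HLm.
    lra.
Qed.

Lemma gY_improper_int T0 : lim_minus_infty Z 1 -> D T0 ->
  exists IL, improper_int_lower L T0 IL /\ 0 < IL.
Proof.
  intros HZ HT0.
  destruct (HZ (/ 4)) as [M HM]; [lra|].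
  set (M2 := Rmin (M - 1) T0).
  assert (HM2 : M2 < M /\ M2 <= T0)
    by (unfold M2; generalize (Rmin_l (M - 1) T0) (Rmin_r (M - 1) T0); lra).
  assert (Dle : forall u, u <= T0 -> D u) by (intros; now apply (in_dom_le tmax u T0)).
  destruct (improper_int_lower_of_bounded tmax L M2 T0 (2 * L M2))
    as [IL [HIL HILge]]; auto; try lra.
  - exact gY_continuous.
  - intros u Hu; now apply Rlt_le, gY_pos, Dle.
  - intros a Ha; apply Rle_trans with (2 * L M2 - 2 * L a);
      [|assert (0 < L a) by (apply gY_pos, Dle; lra); lra].
    apply (RInt_le_of_le_derive L (fun t => 2 * L t) (fun t => 2 * (L t * k t))); auto.
    + intros u Hu; apply (is_derive_scal L), is_derive_gY, Dle; lra.
    + intros u Hu; apply (continuous_scal_r 2 (fun t => L t * k t)), (continuous_mult L k);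
        [apply gY_continuous | apply L_growth_continuous_in_dom]; apply Dle; lra.
    + intros u Hu; apply gY_continuous, Dle; lra.
    + intros u Hu; specialize (HM u ltac:(lra)); apply Rabs_def2 in HM.
      assert (0 < L u) by (apply gY_pos, Dle; lra).
      assert (1 / 2 <= k u) by (apply Rle_trans with (Z u ^ 2); [nra | apply L_growth_ge_sqr]).
      nra.
  - exists IL; split; auto.
    apply Rlt_le_trans with (RInt L (T0 - 1) T0); [|apply HILge; lra].
    apply RInt_gt_0; [lra | intros; apply gY_pos, Dle; lra | intros; apply gY_continuous, Dle; lra].
Qed.

End WeightedY.

Theorem proposition2p2 (d : nat) (q : R) (tmax : option R)
  (X Y Z W g : R -> R) (lam T0 t0 : R) :
  (0 < d)%nat ->
  solves_S d q tmax X Y Z W ->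
  lim_minus_infty X 0 -> lim_minus_infty Y 0 ->
  lim_minus_infty Z 1 -> lim_minus_infty W 0 ->
  in_dom tmax T0 ->
  (exists IX, improper_int_lower X T0 IX) ->
  0 < lam ->
  (forall t, in_dom tmax t ->
     exists It, improper_int_lower X t It /\ g t = lam * exp It) ->
  in_dom tmax t0 -> 0 < Y t0 ->
  (forall s t, in_dom tmax s -> in_dom tmax t -> s < t ->
     g s * Y s < g t * Y t) /\
  (forall t, in_dom tmax t -> 0 < g t * Y t) /\
  (exists IL, improper_int_lower (fun t => g t * Y t) T0 IL /\ 0 < IL).
Proof.
  intros Hd Hsol _ _ HZ _ HT0 _ Hlam Hg Ht0 HYt0.
  split; [|split].
  - intros s t _ Ht.
    exact (gY_strict_incr d q tmax X Y Z W g lam t0 Hd Hsol Hlam Hg Ht0 HYt0 s t Ht).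
  - exact (gY_pos d q tmax X Y Z W g lam t0 Hsol Hlam Hg Ht0 HYt0).
  - exact (gY_improper_int d q tmax X Y Z W g lam t0 Hsol Hlam Hg Ht0 HYt0 T0 HZ HT0).
Qed.
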